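(* Let $1\le r\le n$ be integers and suppose there is a prime $p$ with $\frac{n}{r+1}<p\le\frac{n}{r}$ and $r<p$. Then for every $r$-tuple of positive integers $\mathbf{s}=(s_1,\ldots,s_r)$, $H_n(s_1,\ldots,s_r)$ is not an integer.
   Context: $H_n(s_1,\ldots,s_r)=\sum_{1\le k_1<k_2<\cdots<k_r\le n}\frac{1}{k_1^{s_1}\cdots k_r^{s_r}}$. *)

From HB Require Import structures.
From mathcomp Require Import all_boot all_order all_algebra.
Set Implicit Arguments. Unset Strict Implicit. Unset Printing Implicit Defensive.
Import Order.TTheory GRing.Theory Num.Theory.
Local Open Scope ring_scope.

(* Multiple harmonic sum H_n(s_1,...,s_r) as a rational number.
   Indices k_1 < ... < k_r in {1,...,n} are encoded as strictly increasing
   functions k : 'I_r -> 'I_n, with k_i = (k i).+1. *)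
Definition H (n r : nat) (s : 'I_r -> nat) : rat :=
  \sum_(k : {ffun 'I_r -> 'I_n} |
          [forall i : 'I_r, forall j : 'I_r, (i < j)%N ==> (k i < k j)%N])
     \prod_(i < r) (((k i).+1 ^ s i)%:R)^-1.

From HB Require Import structures.
From mathcomp Require Import all_boot all_order all_algebra.
From mathcomp Require Import zify ring.
Import Order.TTheory GRing.Theory Num.Theory.
Set Implicit Arguments.
Unset Strict Implicit.
Unset Printing Implicit Defensive.

Local Open Scope ring_scope.

(* Since r p <= n < (r + 1) p and r < p, the multiples of p in [1, n] are
   exactly p, 2p, ..., rp, and none of them is divisible by p^2.  Hence the
   term of H_n(s) indexed by (p, 2p, ..., rp) has p-adic valuation -S, where
   S = s_1 + ... + s_r, while every other term has valuation > -S because one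
   of its indices is prime to p.  After multiplication by p^(S-1), all terms
   but the first are p-integral and the first is 1/(c p) for an integer c, so
   H_n(s) is not p-integral, let alone an integer. *)

Definition p_integral (p : nat) (x : rat) :=
  exists2 b : nat, coprime b p & b%:R * x \is a Num.int.

Section PIntegral.

Variable p : nat.

Lemma int_p_integral x : x \is a Num.int -> p_integral p x.
Proof. by exists 1%N; rewrite ?coprime1n ?mul1r. Qed.

Lemma p_integralN x : p_integral p x -> p_integral p (- x).
Proof. by case=> b cb bx; exists b; rewrite // mulrN rpredN. Qed.

Lemma p_integralD x y : p_integral p x -> p_integral p y -> p_integral p (x + y).
Proof.
case=> [b1 c1 i1] [b2 c2 i2]; exists (b1 * b2)%N; first by rewrite coprimeMl c1.
have -> : (b1 * b2)%N%:R * (x + y) = b2%:R * (b1%:R * x) + b1%:R * (b2%:R * y).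
  by rewrite natrM; ring.
by rewrite rpredD // rpredM // rpred_nat.
Qed.

Lemma p_integralM x y : p_integral p x -> p_integral p y -> p_integral p (x * y).
Proof.
case=> [b1 c1 i1] [b2 c2 i2]; exists (b1 * b2)%N; first by rewrite coprimeMl c1.
have -> : (b1 * b2)%N%:R * (x * y) = (b1%:R * x) * (b2%:R * y).
  by rewrite natrM; ring.
exact: rpredM.
Qed.

Lemma p_integralX x m : p_integral p x -> p_integral p (x ^+ m).
Proof.
move=> px; elim: m => [|m IHm]; first exact/int_p_integral/rpred1.
by rewrite exprS; apply: p_integralM.
Qed.

Lemma p_integral_sum (I : finType) (P : pred I) (F : I -> rat) :
  (forall i, P i -> p_integral p (F i)) -> p_integral p (\sum_(i | P i) F i).
Proof.
move=> pF; apply: (big_ind (p_integral p)) => //.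
  exact/int_p_integral/rpred0.
exact: p_integralD.
Qed.

Lemma p_integral_prod (I : finType) (P : pred I) (F : I -> rat) :
  (forall i, P i -> p_integral p (F i)) -> p_integral p (\prod_(i | P i) F i).
Proof.
move=> pF; apply: (big_ind (p_integral p)) => //.
  exact/int_p_integral/rpred1.
exact: p_integralM.
Qed.

Hypothesis p_prime : prime p.

Lemma p_integral_ppart_inv m : (0 < m)%N -> p_integral p ((p ^ logn p m)%:R / m%:R).
Proof.
move=> m_gt0; have [m' p_coprime_m' def_m] := pfactor_coprime p_prime m_gt0.
have m'_neq0 : m'%:R != 0 :> rat.
  by rewrite pnatr_eq0; apply: contraTneq m_gt0 => m'0; rewrite def_m m'0.
have pl_neq0 : (p ^ logn p m)%:R != 0 :> rat.
  by rewrite pnatr_eq0 -lt0n expn_gt0 prime_gt0.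
exists m'; first by rewrite coprime_sym.
have -> : m'%:R * ((p ^ logn p m)%:R / m%:R) = 1 :> rat.
  by rewrite {2}def_m natrM; field; rewrite pl_neq0 m'_neq0.
exact: rpred1.
Qed.

Lemma logn_le1 m : (m < p * p)%N -> (logn p m <= 1)%N.
Proof.
case: m => [|m] lt_mpp; first by rewrite logn0.
rewrite leqNgt -(pfactor_dvdn 2 p_prime) //; apply/negP => /dvdn_leq.
by move/(_ isT); rewrite leqNgt -mulnn lt_mpp.
Qed.

Lemma p_integral_inv_mulp c : (0 < c)%N -> ~ p_integral p ((c * p)%:R^-1).
Proof.
move=> c_gt0 [b coprime_bp int_b].
have cp_neq0 : (c * p)%:R != 0 :> rat.
  by rewrite pnatr_eq0 muln_eq0 negb_or -!lt0n c_gt0 prime_gt0.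
have nat_b : (b%:R * (c * p)%:R^-1 : rat) \is a Num.nat.
  by rewrite natrEint int_b mulr_ge0 ?invr_ge0.
have [z def_z] := natrP nat_b.
have b_eq : b = (z * (c * p))%N.
  by apply/eqP; rewrite -(eqr_nat rat) natrM -def_z mulfVK.
move: coprime_bp; rewrite b_eq mulnA coprime_sym prime_coprime //.
by rewrite (dvdn_mull _ (dvdnn p)).
Qed.

End PIntegral.

Section IncreasingMaps.

Variables (m : nat) (g : nat -> nat).
Hypothesis g_incr : forall i, (i.+1 < m)%N -> (g i < g i.+1)%N.

Lemma increasing_gap i d : (i + d < m)%N -> (g i + d <= g (i + d))%N.
Proof.
elim: d => [|d IHd] lt_idm; first by rewrite !addn0.
have := IHd ltac:(lia); have := @g_incr (i + d) ltac:(lia).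
by rewrite [(i + d.+1)%N]addnS; lia.
Qed.

Lemma increasing_bounded_id : (forall i, (i < m)%N -> (g i < m)%N) ->
  forall i, (i < m)%N -> g i = i.
Proof.
move=> g_lt i lt_im.
have := @increasing_gap 0 i; have := @increasing_gap i (m.-1 - i).
have := g_lt m.-1; rewrite add0n subnKC; lia.
Qed.

End IncreasingMaps.

Section Multiples.

Variables (n r p : nat).
Hypotheses (p_prime : prime p) (rp_le_n : (r * p <= n)%N).

Let p_gt0 : (0 < p)%N := prime_gt0 p_prime.

Definition increasing (k : {ffun 'I_r -> 'I_n}) :=
  [forall i : 'I_r, forall j : 'I_r, (i < j)%N ==> (k i < k j)%N].

Definition Hterm (s : 'I_r -> nat) (k : {ffun 'I_r -> 'I_n}) : rat :=
  \prod_(i < r) (((k i).+1 ^ s i)%:R)^-1.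

Lemma multiple_lt (i : 'I_r) : ((i.+1 * p).-1 < n)%N.
Proof.
have : (i.+1 * p <= r * p)%N by rewrite leq_mul2r ltn_ord orbT.
have : (0 < i.+1 * p)%N by rewrite muln_gt0.
lia.
Qed.

Definition multiples : {ffun 'I_r -> 'I_n} := [ffun i => Ordinal (multiple_lt i)].

Lemma multiplesE i : (multiples i).+1 = (i.+1 * p)%N.
Proof. by rewrite ffunE prednK // muln_gt0. Qed.

Lemma increasing_multiples : increasing multiples.
Proof.
apply/forallP=> i; apply/forallP=> j; apply/implyP=> lt_ij.
have : (i.+1 * p < j.+1 * p)%N by rewrite ltn_pmul2r.
by have := multiplesE i; have := multiplesE j; lia.
Qed.

Lemma p_integral_pvaluation_term (s : 'I_r -> nat) (k : {ffun 'I_r -> 'I_n}) :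
  p_integral p (p%:R ^+ (\sum_i s i * logn p (k i).+1) * Hterm s k).
Proof.
rewrite /Hterm -prodrXr -big_split /=; apply: p_integral_prod => i _.
have -> : p%:R ^+ (s i * logn p (k i).+1) * ((k i).+1 ^ s i)%:R^-1
          = ((p ^ logn p (k i).+1)%:R / (k i).+1%:R) ^+ s i :> rat.
  by rewrite exprMn exprVn -!natrX -expnM mulnC.
exact/p_integralX/p_integral_ppart_inv.
Qed.

Lemma Hterm_multiples s : (0 < \sum_i s i)%N ->
  p%:R ^+ (\sum_i s i).-1 * Hterm s multiples = ((\prod_(i < r) i.+1 ^ s i) * p)%:R^-1.
Proof.
move=> S_gt0.
have -> : Hterm s multiples = ((\prod_(i < r) i.+1 ^ s i) * p ^ (\sum_i s i))%:R^-1.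
  rewrite /Hterm prodfV -natr_prod expn_sum -big_split /=.
  by congr (_%:R^-1); apply: eq_bigr => i _; rewrite multiplesE expnMn.
rewrite -(prednK S_gt0) expnSr !natrM natrX.
have c_neq0 : (\prod_(i < r) i.+1 ^ s i)%:R != 0 :> rat.
  by rewrite pnatr_eq0 -lt0n prodn_gt0 // => i; rewrite expn_gt0.
have p_neq0 : p%:R != 0 :> rat by rewrite pnatr_eq0 -lt0n.
by field; rewrite c_neq0 p_neq0 expf_neq0.
Qed.

Hypothesis n_lt_r1p : (n < r.+1 * p)%N.

Lemma increasing_dvd_multiples k :
  increasing k -> (forall i, p %| (k i).+1)%N -> k = multiples.
Proof.
move=> k_incr p_dvd.
have k_lt (i j : 'I_r) : (i < j)%N -> (k i < k j)%N.
  by move=> lt_ij; have /forallP/(_ j)/implyP := forallP k_incr i; apply.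
have quotK (i : 'I_r) : ((k i).+1 %/ p * p)%N = (k i).+1 by rewrite divnK.
have quot_gt0 (i : 'I_r) : (0 < (k i).+1 %/ p)%N by rewrite divn_gt0 // dvdn_leq.
apply/ffunP=> i; apply: val_inj; rewrite ffunE /=.
pose g j := ((k (insubd i j)).+1 %/ p).-1.
have g_incr j : (j.+1 < r)%N -> (g j < g j.+1)%N.
  move=> lt_j1r; have := quot_gt0 (insubd i j).
  suff : ((k (insubd i j)).+1 %/ p < (k (insubd i j.+1)).+1 %/ p)%N by rewrite /g; lia.
  rewrite -(ltn_pmul2r p_gt0) !quotK ltnS; apply: k_lt.
  by rewrite !insubdK //; lia.
have g_lt j : (j < r)%N -> (g j < r)%N.
  move=> _; have := quot_gt0 (insubd i j).
  suff : ((k (insubd i j)).+1 %/ p < r.+1)%N by rewrite /g; lia.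
  rewrite -(ltn_pmul2r p_gt0) quotK; exact: leq_ltn_trans (ltn_ord _) n_lt_r1p.
have := increasing_bounded_id g_incr g_lt (ltn_ord i).
rewrite /g valKd => qi.
have q_eq : ((k i).+1 %/ p)%N = i.+1 by have := quot_gt0 i; lia.
by have := quotK i; rewrite q_eq; lia.
Qed.

Hypothesis r_lt_p : (r < p)%N.

Lemma pvaluation_lt s k : (forall i, 0 < s i)%N -> increasing k -> k != multiples ->
  (\sum_i s i * logn p (k i).+1 < \sum_i s i)%N.
Proof.
move=> s_gt0 k_incr k_neq.
have [i p_ndvd] : exists i, ~~ (p %| (k i).+1)%N.
  apply/existsP; apply: contraNT k_neq; rewrite negb_exists => /forallP p_dvd.
  by apply/eqP/increasing_dvd_multiples => // i; apply/negPn.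
rewrite (bigD1 i) //= [X in (_ < X)%N](bigD1 i) //=.
have -> : logn p (k i).+1 = 0%N.
  by apply/eqP; rewrite -leqn0 leqNgt logn_gt0 mem_primes (negbTE p_ndvd) !andbF.
rewrite muln0 add0n -add1n leq_add //.
have n_lt_pp : (n < p * p)%N.
  by apply: leq_trans n_lt_r1p _; rewrite leq_mul2r r_lt_p orbT.
apply: leq_sum => j _; rewrite -[leqRHS]muln1 leq_mul // logn_le1 //.
exact: leq_ltn_trans (ltn_ord _) n_lt_pp.
Qed.

Lemma p_integral_Hterm s k : (forall i, 0 < s i)%N -> increasing k -> k != multiples ->
  p_integral p (p%:R ^+ (\sum_i s i).-1 * Hterm s k).
Proof.
move=> s_gt0 k_incr k_neq; have := pvaluation_lt s_gt0 k_incr k_neq.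
set a := (\sum_i _ * _)%N => lt_aS.
rewrite -(subnK (_ : a <= (\sum_i s i).-1)%N) ?exprD -?mulrA; last by lia.
apply: p_integralM; first by apply: int_p_integral; rewrite -natrX rpred_nat.
exact: p_integral_pvaluation_term.
Qed.

End Multiples.

Theorem mainTheorem6 (n r : nat) (hr1 : (1 <= r)%N) (hrn : (r <= n)%N)
  (p : nat) (hp : prime p)
  (hlo : (n%:R / (r.+1)%:R : rat) < p%:R) (hhi : (p%:R : rat) <= n%:R / r%:R)
  (hrp : (r < p)%N)
  (s : 'I_r -> nat) (hs : forall i, (0 < s i)%N) :
  ~ (H n s \is a Num.int).
Proof.
have n_lt_r1p : (n < r.+1 * p)%N.
  by move: hlo; rewrite ltr_pdivrMr ?ltr0n // -natrM ltr_nat mulnC.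
have rp_le_n : (r * p <= n)%N.
  by move: hhi; rewrite ler_pdivlMr ?ltr0n // -natrM ler_nat mulnC.
have S_gt0 : (0 < \sum_i s i)%N by rewrite (bigD1 (Ordinal hr1)) //= addn_gt0 hs.
have c_gt0 : (0 < \prod_(i < r) i.+1 ^ s i)%N by rewrite prodn_gt0 // => i; rewrite expn_gt0.
pose kp := multiples hp rp_le_n.
have H_split : H n s = Hterm s kp + \sum_(k | increasing k && (k != kp)) Hterm s k.
  by rewrite /H (bigD1 kp) //; apply: increasing_multiples.
move=> H_int; apply: (p_integral_inv_mulp hp c_gt0).
rewrite -(Hterm_multiples hp rp_le_n S_gt0).
set q := p%:R ^+ _.
have -> : q * Hterm s kp = q * H n s - q * \sum_(k | increasing k && (k != kp)) Hterm s k.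
  by rewrite H_split mulrDr addrK.
apply: p_integralD; first by apply: int_p_integral; rewrite rpredM // /q -natrX rpred_nat.
apply/p_integralN; rewrite mulr_sumr; apply: p_integral_sum => k /andP[k_incr k_neq].
exact: (p_integral_Hterm n_lt_r1p hrp hs k_incr k_neq).
Qed.
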